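(* Let $k$ be a positive integer such that $k+1$ is an odd prime, and let $p>k^2+k$ be an odd prime. Let $(u_1,\ldots,u_k)\in\mathbb{Z}_{>0}^k$ satisfy $\gcd(u_1,\ldots,u_k)=1$ and $u_i\equiv i\pmod p$ for all $i=1,\ldots,k$. Then there is a real number $t$ with $\lVert t u_i\rVert\ge\frac1{k+1}$ for all $i=1,\ldots,k$.
   Context: For $x\in\mathbb{R}$, $\lVert x\rVert$ denotes the distance from $x$ to the nearest integer. *)

From Stdlib Require Import Reals ZArith Znumtheory.
Open Scope R_scope.

(* floor of x : the unique integer n with IZR n <= x < IZR n + 1 (Stdlib: up x - 1) *)
Definition floorR (x : R) : Z := (up x - 1)%Z.

Definition dist_int (x : R) : R :=
  Rmin (x - IZR (floorR x)) (IZR (floorR x) + 1 - x).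

Definition gcd_one (k : nat) (u : nat -> Z) : Prop :=
  forall d : Z, (forall i : nat, (1 <= i <= k)%nat -> (d | u i)%Z) -> (d | 1)%Z.

(* Let q = k + 1.  Suppose integers b, j are such that, for every i, the residue
   r_i of b u_i + j i modulo q is nonzero, and r_i <> q - 1 unless q | j.  Choose
   0 <= c < q and a with a q = j p + c, and put t = b/q + a/p.  As u_i = i (mod p),
   t u_i = (p r_i + c i)/(p q) modulo 1, and since c i <= k^2 < p this fraction lies
   in [1/q, 1 - 1/q].

   Such b, j are found over F_q for v(i) = u_i mod q, which is not identically 0
   because gcd(u) = 1.  If v has no zero on F_q^*, take (b, j) = (1, 0).  Otherwise
   look at the maps x |-> v(x) - z x on F_q^*.  Summed over z, the product of their
   values is minus the leading coefficient of a polynomial of degree q - 1, namely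
   -prod(-x) = -prod x.  A map that permutes F_q^* contributes prod x, one that
   vanishes somewhere contributes 0, and z = 0, z = v(x1)/x1 are of the second
   kind; so the number of permutations would be -1 mod q yet at most q - 2.  Hence
   some map misses 0 and some e <> 0, and b = -1/e, j = z/e do the job. *)

From Stdlib Require Import Reals ZArith Znumtheory Lia Lra Classical.
From mathcomp Require all_boot all_fingroup all_algebra cyclic finfield zify.

Module PrimeFieldLemmas.
Import all_boot all_fingroup all_algebra cyclic finfield zify.
Import GRing.Theory FinRing.Theory.
Set Implicit Arguments. Unset Strict Implicit. Unset Printing Implicit Defensive.
Local Open Scope ring_scope.

Section FinFieldPowerSums.
Variable F : finFieldType.

Lemma natr_card_finField : #|F|%:R = 0 :> F.
Proof. by rewrite -zmodXgE -cardsT expg_cardG ?inE. Qed.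

Lemma sum_expr_finField_lt j : (j < #|F|.-1)%N -> \sum_(x : F) x ^+ j = 0.
Proof.
case: j => [_ | j ltjF].
  by under eq_bigr do rewrite expr0; rewrite sumr_const natr_card_finField.
have /exists_inP[a a_nz a_j] : [exists a in [set~ (0 : F)], a ^+ j.+1 != 1].
  apply: contraLR ltjF; rewrite negb_exists_in -leqNgt => /forall_inP roots.
  rewrite -(cardsC1 (0 : F)) cardE max_unity_roots ?enum_uniq //.
  by apply/allP => x; rewrite mem_enum => /roots; rewrite unity_rootE negbK.
rewrite in_setC1 in a_nz.
have : \sum_(x : F) x ^+ j.+1 = a ^+ j.+1 * \sum_(x : F) x ^+ j.+1.
  rewrite mulr_sumr (reindex_inj (mulfI a_nz)) /=.
  by apply: eq_bigr => x _; rewrite exprMn.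
move/eqP; rewrite -subr_eq0 -{1}[\sum__ _]mul1r -mulrBl mulf_eq0 subr_eq0 eq_sym.
by rewrite (negbTE a_j) => /eqP.
Qed.

Lemma sum_expr_finField_pred_card : \sum_(x : F) x ^+ #|F|.-1 = -1.
Proof.
have F_gt1 := card_finNzRing_gt1 F.
have F_gt0 : (0 < #|F|)%N by apply: ltnW.
have n1_nz : #|F|.-1 != 0%N by rewrite -lt0n -ltnS prednK.
rewrite (bigD1 0) //= expr0n (negbTE n1_nz) add0r.
rewrite (eq_bigr (fun=> 1)) => [|x x_nz]; last first.
  by apply: (mulfI x_nz); rewrite -exprS prednK // expf_card mulr1.
rewrite sumr_const cardC1; apply: (addIr 1).
by rewrite natr1 prednK // natr_card_finField addNr.
Qed.

Lemma sum_horner_finField (P : {poly F}) : (size P <= #|F|)%N ->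
  \sum_(z : F) P.[z] = - P`_#|F|.-1.
Proof.
move=> sP.
have F_gt0 : (0 < #|F|)%N by apply: ltnW (card_finNzRing_gt1 F).
transitivity (\sum_(z : F) \sum_(i < #|F|) P`_i * z ^+ i).
  apply: eq_bigr => z _; rewrite horner_coef (big_ord_widen _ (fun i => P`_i * z ^+ i) sP).
  rewrite big_mkcond /=; apply: eq_bigr => i _; case: ifP => // /negbT.
  by rewrite -leqNgt => /(nth_default 0) ->; rewrite mul0r.
rewrite exchange_big /= -(prednK F_gt0) big_ord_recr /= big1 ?add0r.
  by rewrite -mulr_sumr sum_expr_finField_pred_card mulrN1.
by move=> i _; rewrite -mulr_sumr sum_expr_finField_lt ?mulr0.
Qed.
End FinFieldPowerSums.

Section Tilt.
Variables (F : finFieldType) (v : F -> F).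

Definition tilt (z x : F) : F := v x - z * x.

Lemma sum_prod_tilt :
  \sum_(z : F) \prod_(x in [set~ 0]) tilt z x = - \prod_(x in [set~ 0]) (- x).
Proof.
pose Q := \prod_(x <- enum [set~ (0 : F)]) ('X - (v x / x)%:P).
have tiltE z : \prod_(x in [set~ 0]) tilt z x = \prod_(x in [set~ 0]) (- x) * Q.[z].
  rewrite horner_prod big_enum -big_split /=; apply: eq_bigr => x; rewrite in_setC1 => x_nz.
  by rewrite hornerXsubC mulrBr !mulNr opprK mulrCA divff // mulr1 /tilt addrC mulrC.
have F_gt0 : (0 < #|F|)%N by apply: ltnW (card_finNzRing_gt1 F).
have size_Q : size Q = #|F| by rewrite size_prod_XsubC -cardE cardsC1 prednK.
rewrite (eq_bigr _ (fun z _ => tiltE z)) -mulr_sumr sum_horner_finField ?size_Q //.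
have -> : Q`_#|F|.-1 = lead_coef Q by rewrite lead_coefE size_Q.
by rewrite (monicP (monic_prod_XsubC _ _ _)) mulrN1.
Qed.

Lemma prod_tilt_perm z : tilt z @: [set~ 0] = [set~ 0] ->
  \prod_(x in [set~ 0]) tilt z x = \prod_(x in [set~ 0]) x.
Proof.
move=> im_tilt.
have inj_tilt : {in [set~ 0] &, injective (tilt z)} by apply/imset_injP; rewrite im_tilt.
by rewrite -[in RHS]im_tilt big_imset.
Qed.

Lemma prod_tilt_eq0 z : 0 \in tilt z @: [set~ 0] -> \prod_(x in [set~ 0]) tilt z x = 0.
Proof. by case/imsetP => x x_nz tx0; rewrite (bigD1 x) //= -tx0 mul0r. Qed.

Definition perm_tilts : {set F} := [set z | tilt z @: [set~ 0] == [set~ 0]].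

Lemma card_perm_tilts_lt x0 x1 : x0 != 0 -> v x0 = 0 -> x1 != 0 -> v x1 != 0 ->
  (#|perm_tilts|.+1 < #|F|)%N.
Proof.
move=> x0_nz vx0 x1_nz vx1.
have not_perm z x : x != 0 -> tilt z x = 0 -> z \in ~: perm_tilts.
  move=> x_nz tx0; rewrite !inE; apply/eqP => im_tilt.
  have : tilt z x \in tilt z @: [set~ 0] by rewrite imset_f // in_setC1.
  by rewrite tx0 im_tilt in_setC1 eqxx.
pose bad := [set 0; v x1 / x1].
have : (#|perm_tilts| + #|bad| <= #|F|)%N.
  rewrite -(cardsC perm_tilts) leq_add2l; apply: subset_leq_card; apply/subsetP => z.
  case/set2P => ->.
    by apply: (not_perm _ x0); rewrite // /tilt vx0 mul0r subr0.
  by apply: (not_perm _ x1); rewrite // /tilt divfK // subrr.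
by rewrite cards2 eq_sym mulf_neq0 ?invr_eq0 // addn2.
Qed.

Hypotheses (pcharF : #|F| \in [pchar F]) (oddF : odd #|F|).

Lemma prod_opp_nonzero : \prod_(x in [set~ 0]) (- x) = \prod_(x in [set~ (0 : F)]) x.
Proof.
have F_gt0 : (0 < #|F|)%N by apply: ltnW (card_finNzRing_gt1 F).
have even_units : odd #|F|.-1 = false.
  by apply/negbTE; move: oddF; rewrite -{1}(prednK F_gt0).
by rewrite prodrN cardsC1 -signr_odd even_units expr0 mul1r.
Qed.

Lemma exists_tilt_nonvanishing_not_onto x0 x1 :
  x0 != 0 -> v x0 = 0 -> x1 != 0 -> v x1 != 0 ->
  exists2 z, 0 \notin tilt z @: [set~ 0] & tilt z @: [set~ 0] != [set~ 0].
Proof.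
move=> x0_nz vx0 x1_nz vx1.
have [/existsP[z /andP[z0 z_not_onto]] | /existsPn perm_tilt] :=
  boolP [exists z, (0 \notin tilt z @: [set~ 0]) && (tilt z @: [set~ 0] != [set~ 0])].
  by exists z.
pose P := \prod_(x in [set~ (0 : F)]) x.
have sum_prod : \sum_(z : F) \prod_(x in [set~ 0]) tilt z x = #|perm_tilts|%:R * P.
  rewrite (bigID (mem perm_tilts)) /= [X in _ + X]big1 ?addr0 => [|z]; last first.
    rewrite inE => z_not_perm; apply: prod_tilt_eq0.
    by move: (perm_tilt z); rewrite z_not_perm andbT negbK.
  rewrite (eq_bigr (fun=> P)) => [|z]; last by rewrite inE => /eqP/prod_tilt_perm.
  by rewrite sumr_const mulr_natl.
have P_nz : P != 0 by apply/prodf_neq0 => x; rewrite in_setC1.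
have : #|perm_tilts|.+1%:R == 0 :> F.
  move: sum_prod; rewrite sum_prod_tilt prod_opp_nonzero => /eqP.
  rewrite eq_sym -subr_eq0 opprK -[X in _ + X]mul1r -mulrDl natr1 mulf_eq0.
  by rewrite (negbTE P_nz) orbF.
rewrite -(dvdn_pcharf pcharF) => /(dvdn_leq (ltn0Sn _)).
by rewrite leqNgt (card_perm_tilts_lt x0_nz vx0 x1_nz vx1).
Qed.

Lemma exists_linear_form_avoiding : (exists2 x1, x1 != 0 & v x1 != 0) ->
  exists B J : F, forall x, x != 0 ->
    (B * v x + J * x != 0) && ((J == 0) || (B * v x + J * x != -1)).
Proof.
move=> [x1 x1_nz vx1].
have [/existsP[x0 /andP[x0_nz /eqP vx0]] | /existsPn v_nz] :=
  boolP [exists x, (x != 0) && (v x == 0)]; last first.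
  exists 1, 0 => x x_nz; rewrite mul1r mul0r addr0 eqxx andbT.
  by move: (v_nz x); rewrite x_nz.
have [z z0 /eqP not_onto] := exists_tilt_nonvanishing_not_onto x0_nz vx0 x1_nz vx1.
have /subsetPn[e e_nz e_notin] : ~~ ([set~ 0] \subset tilt z @: [set~ 0]).
  apply/negP => sub; apply: not_onto; apply/eqP; rewrite eqEsubset sub andbT.
  apply/subsetP => y y_im; rewrite in_setC1.
  by apply: contraNneq z0 => y0; rewrite y0 in y_im.
rewrite in_setC1 in e_nz.
exists (- e^-1), (e^-1 * z) => x x_nz.
have tx_im : tilt z x \in tilt z @: [set~ 0] by rewrite imset_f // in_setC1.
have -> : - e^-1 * v x + e^-1 * z * x = - e^-1 * tilt z x.
  by rewrite /tilt mulrBr !mulNr opprK mulrA.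
rewrite mulf_neq0 ?oppr_eq0 ?invr_eq0 //=; last first.
  by apply: contraNneq z0 => tx0; rewrite tx0 in tx_im.
apply/orP; right; rewrite mulNr eqr_opp -[1](mulVf e_nz) (inj_eq (mulfI _)) ?invr_eq0 //.
by apply: contraNneq e_notin => <-.
Qed.

End Tilt.

Lemma exists_linear_form_avoiding_nat (q : nat) (n : nat -> nat) : prime q -> odd q ->
  (exists2 i, (0 < i < q)%N & ~~ (q %| n i)%N) ->
  exists b j : nat, forall i, (0 < i < q)%N ->
    ~~ (q %| b * n i + j * i)%N && ((q %| j)%N || ~~ (q %| (b * n i + j * i).+1)%N).
Proof.
move=> q_pr q_odd [i0 i0_range ndvd].
have pcharF : #|'F_q| \in [pchar 'F_q] by rewrite card_Fp ?pchar_Fp.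
have dvd_q m : (q %| m)%N = (m%:R == 0 :> 'F_q) := dvdn_pcharf (pchar_Fp q_pr) m.
have val_natr i : (i < q)%N -> (i%:R : 'F_q) = i :> nat.
  by move=> lt_iq; rewrite (val_Fp_nat q_pr) modn_small.
have natr_nz i : (0 < i < q)%N -> (i%:R : 'F_q) != 0.
  case/andP => i_gt0 lt_iq; rewrite -dvd_q; apply/negP => /(dvdn_leq i_gt0).
  by rewrite leqNgt lt_iq.
pose v (x : 'F_q) : 'F_q := (n x)%:R.
have oddF : odd #|'F_q| by rewrite card_Fp.
have [|B [J BJ]] := @exists_linear_form_avoiding _ v pcharF oddF.
  exists i0%:R; first exact: natr_nz.
  by rewrite /v val_natr ?(andP i0_range).2 // -dvd_q.
exists B, J => i i_range; move: (BJ _ (natr_nz i i_range)).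
have -> : B * v i%:R + J * i%:R = (B * n i + J * i)%:R.
  by rewrite /v val_natr ?(andP i_range).2 // natrD !natrM !natr_Zp.
have -> : (J == 0) = (q %| J)%N by rewrite dvd_q natr_Zp.
by rewrite -addr_eq0 natr1 -!dvd_q.
Qed.

Lemma dvdn_Z (d m : nat) : (d %| m)%N <-> (Z.of_nat d | Z.of_nat m)%Z.
Proof.
split => [/dvdnP[c ->] | [z hz]]; first by exists (Z.of_nat c); lia.
apply/dvdnP; case: d hz => [|d] hz; first by exists 0%N; lia.
by exists (Z.to_nat z); lia.
Qed.

Lemma prime_of_Zprime (q : nat) : Znumtheory.prime (Z.of_nat q) -> prime q.
Proof.
move=> q_pr; have q_ge2 := prime_ge_2 _ q_pr.
apply/primeP; split => [|d /dvdn_Z d_dvd]; first by lia.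
by have := prime_divisors _ q_pr _ d_dvd; lia.
Qed.

Local Open Scope Z_scope.

Lemma exists_linear_form_avoiding_Z (q : Z) (u : nat -> Z) :
  Znumtheory.prime q -> q <> 2 ->
  (forall i : nat, 0 < Z.of_nat i < q -> 0 <= u i) ->
  (exists i : nat, 0 < Z.of_nat i < q /\ ~ (q | u i)) ->
  exists b j : Z, forall i : nat, 0 < Z.of_nat i < q ->
    ~ (q | b * u i + j * Z.of_nat i) /\ ((q | j) \/ ~ (q | b * u i + j * Z.of_nat i + 1)).
Proof.
move=> q_pr q_ne2 u_ge0 [i0 [i0_range i0_ndvd]].
have [n q_eq] : exists n, q = Z.of_nat n.
  by exists (Z.to_nat q); have := prime_ge_2 _ q_pr; lia.
subst q; rename n into q.
have q_odd : odd q.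
  by case: (even_prime (prime_of_Zprime q_pr)) => // q2; case: q_ne2; rewrite q2.
have [|b [j pattern]] :=
  exists_linear_form_avoiding_nat (n := fun i => Z.to_nat (u i)) (prime_of_Zprime q_pr) q_odd.
  exists i0; first by lia.
  by apply/negP => /dvdn_Z; rewrite Z2Nat.id //; apply: u_ge0.
exists (Z.of_nat b), (Z.of_nat j) => i i_range.
have /andP[ndvd dvd_or] := pattern i ltac:(lia).
have u_i_ge0 := u_ge0 i i_range.
have N_E : Z.of_nat b * u i + Z.of_nat j * Z.of_nat i = Z.of_nat (b * Z.to_nat (u i) + j * i).
  by lia.
rewrite N_E (_ : _ + 1 = Z.of_nat (b * Z.to_nat (u i) + j * i).+1); last by lia.
split => [/dvdn_Z | ]; first exact/negP.
case/orP: dvd_or => [/dvdn_Z | ndvd1]; [by left | right => /dvdn_Z; exact/negP].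
Qed.

End PrimeFieldLemmas.

Open Scope Z_scope.

Lemma numerator_window (p q N c i : Z) :
  0 < q -> 0 <= c < q -> 0 <= i -> c * i < p -> ~ (q | N) -> (c = 0 \/ ~ (q | N + 1)) ->
  p <= p * (N mod q) + c * i <= p * q - p.
Proof.
intros hq hc hi hci hN hN1.
pose proof (Z.mod_pos_bound N q hq) as hr.
assert (hr0 : N mod q <> 0) by (intro e; apply hN, Z.mod_divide; lia).
destruct hN1 as [-> | hN1].
- nia.
- assert (N mod q <> q - 1).
  { intro e; apply hN1; exists (N / q + 1); pose proof (Z.div_mod N q); lia. }
  nia.
Qed.

Lemma exists_mod_complement (q x : Z) :
  0 < q -> exists a c, a * q = x + c /\ 0 <= c < q /\ ((q | x) -> c = 0).
Proof.
intros hq; exists (- (- x / q)), (- x mod q); split; [|split].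
- pose proof (Z.div_mod (- x) q); lia.
- apply Z.mod_pos_bound; lia.
- intros hx; apply Z.mod_divide; [lia | now apply Z.divide_opp_r].
Qed.

Lemma exists_not_divisible (k : nat) (u : nat -> Z) (d : Z) :
  gcd_one k u -> 1 < d -> exists i, (1 <= i <= k)%nat /\ ~ (d | u i).
Proof.
intros hgcd hd; apply NNPP; intros hall.
assert (hd1 : (d | 1)).
{ apply hgcd; intros i hi; apply NNPP; intros hnd; apply hall; now exists i. }
apply Z.divide_pos_le in hd1; lia.
Qed.

Lemma eq_div_add_of_mod (p x i : Z) : 0 <= i < p -> x mod p = i mod p -> x = p * (x / p) + i.
Proof.
intros hi hx; rewrite (Z.mod_small i) in hx by lia.
rewrite <- hx; apply Z.div_mod; lia.
Qed.

Open Scope R_scope.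

Lemma floorR_IZR_add (K : Z) (x : R) : 0 <= x < 1 -> floorR (IZR K + x) = K.
Proof.
intros hx; unfold floorR.
rewrite <- (tech_up (IZR K + x) (K + 1)); rewrite ?plus_IZR; lia || lra.
Qed.

Lemma dist_int_IZR_add_ge (K : Z) (x d : R) :
  0 < d -> d <= x <= 1 - d -> dist_int (IZR K + x) >= d.
Proof.
intros hd hx; unfold dist_int; rewrite floorR_IZR_add by lra.
unfold Rmin; destruct (Rle_dec _ _); lra.
Qed.

Lemma dist_int_ratio_ge (M U P Q K N : Z) :
  (0 < P)%Z -> (0 < Q)%Z -> (M * U = P * Q * K + N)%Z -> (P <= N <= P * Q - P)%Z ->
  dist_int (IZR M / IZR (P * Q) * IZR U) >= 1 / IZR Q.
Proof.
intros hP hQ hMU hN.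
apply IZR_lt in hP, hQ.
assert (hN1 : IZR P <= IZR N) by (apply IZR_le; lia).
assert (hN2 : IZR N <= IZR P * IZR Q - IZR P)
  by (rewrite <- mult_IZR, <- minus_IZR; apply IZR_le; lia).
replace (IZR M / IZR (P * Q) * IZR U) with (IZR K + IZR N / (IZR P * IZR Q)).
2: { assert (e : IZR M * IZR U = IZR P * IZR Q * IZR K + IZR N)
       by (rewrite <- !mult_IZR, <- plus_IZR; now f_equal).
     rewrite mult_IZR; unfold Rdiv.
     rewrite Rmult_assoc, (Rmult_comm (/ _)), <- Rmult_assoc, e; field; lra. }
apply dist_int_IZR_add_ge; [apply Rdiv_lt_0_compat; lra | split].
- assert (e : IZR N / (IZR P * IZR Q) - 1 / IZR Q = (IZR N - IZR P) / (IZR P * IZR Q))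
    by (field; lra).
  assert (0 <= (IZR N - IZR P) / (IZR P * IZR Q)) by (apply Rle_mult_inv_pos; nra).
  lra.
- assert (e : 1 - 1 / IZR Q - IZR N / (IZR P * IZR Q)
              = (IZR P * IZR Q - IZR P - IZR N) / (IZR P * IZR Q)) by (field; lra).
  assert (0 <= (IZR P * IZR Q - IZR P - IZR N) / (IZR P * IZR Q))
    by (apply Rle_mult_inv_pos; nra).
  lra.
Qed.

Theorem proposition1p2 (k : nat) (p : Z) (u : nat -> Z) :
  (1 <= k)%nat ->
  prime (Z.of_nat k + 1) -> (Z.of_nat k + 1 <> 2)%Z ->
  prime p -> (p <> 2)%Z ->
  (p > Z.of_nat k * Z.of_nat k + Z.of_nat k)%Z ->
  (forall i : nat, (1 <= i <= k)%nat -> (u i > 0)%Z) ->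
  gcd_one k u ->
  (forall i : nat, (1 <= i <= k)%nat -> (u i mod p = Z.of_nat i mod p)%Z) ->
  exists t : R, forall i : nat, (1 <= i <= k)%nat ->
    dist_int (t * IZR (u i)) >= 1 / INR (k + 1).
Proof.
intros _ hq hq2 hp _ hpk hpos hgcd hmod.
set (q := (Z.of_nat k + 1)%Z) in *.
pose proof (prime_ge_2 _ hq) as hq1; pose proof (prime_ge_2 _ hp) as hp1.
destruct (PrimeFieldLemmas.exists_linear_form_avoiding_Z (u := u) hq hq2) as [b [j hbj]].
{ intros i hi; specialize (hpos i ltac:(lia)); lia. }
{ destruct (exists_not_divisible k u q hgcd) as [i [hi hnd]]; [lia |].
  exists i; split; [lia | exact hnd]. }
destruct (exists_mod_complement q (j * p)) as [a [c [hac [hc hc0]]]]; [lia |].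
exists (IZR (b * p + a * q) / IZR (p * q)); intros i hi.
destruct (hbj i ltac:(lia)) as [hN hN1].
set (N := (b * u i + j * Z.of_nat i)%Z) in *.
assert (hu : (u i = p * (u i / p) + Z.of_nat i)%Z)
  by (apply eq_div_add_of_mod; [nia | apply hmod, hi]).
replace (INR (k + 1)) with (IZR q) by (rewrite INR_IZR_INZ; f_equal; lia).
apply dist_int_ratio_ge
  with (K := (N / q + a * (u i / p))%Z) (N := (p * (N mod q) + c * Z.of_nat i)%Z);
  [lia | lia | pose proof (Z.div_mod N q ltac:(lia)); nia |].
apply numerator_window; [lia | lia | lia | nia | exact hN |].
destruct hN1 as [hj | hN1]; [left; apply hc0, Z.divide_mul_l, hj | now right].
Qed.
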